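(* Let $(S,C,T,\mathbf{p},\mathbf{c})$ be a DFEP instance, let $\rho>0$, let $D_E$ be a decision tree for it with expected testing cost $E=cost_E(D_E)$ and let $D_W$ be a decision tree for it with worst testing cost $W=cost_W(D_W)$. Let $D$ be the tree returned by \texttt{CombineTrees}$(D_E,D_W,\rho)$. Then $cost_E(D)\le (1+1/\rho)E$ and $cost_W(D)\le (1+\rho)W$.
   Context: A DFEP instance $(S,C,T,\mathbf{p},\mathbf{c})$: $S$ a finite set of objects partitioned into classes $C$; $T$ a complete set of tests $t:S\to\{1,\dots,\ell\}$ (any two distinct objects are distinguished by some test); $\mathbf p$ a probability distribution on $S$; each test $t$ has a cost $c(t)\in\mathbb{Q}^+$. A decision tree is a leaf labeled with a class if all objects in the current set belong to that class; otherwise its root is labeled with a test $t$ and its children are decision trees for the nonempty sets $\{s: t(s)=i\}$ within the current set. $cost(D,s)$ is the sum of the costs of the tests on the root-to-leaf path of object $s$; $cost_W(D)=\max_{s} cost(D,s)$ and $cost_E(D)=\sum_s cost(D,s)p(s)$. Procedure \texttt{CombineTrees}$(D_E,D_W,\rho)$: (1) call a node $v$ of $D_E$ replaceable if the total cost of the path from the root of $D_E$ to $v$ (including $v$) is at least $\rho W$ while the cost of the path from the root of $D_E$ to the parent of $v$ is smaller than $\rho W$; let $R$ be the set of replaceable nodes. (2) For each $v\in R$, let $S(v)$ be the set of objects associated with leaves of the subtree of $D_E$ rooted at $v$, let $D_W^{S(v)}$ be the decision tree for $S(v)$ obtained from $D_W$ by disassociating every object of $S\setminus S(v)$ from it, and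 replace the subtree of $D_E$ rooted at $v$ by $D_W^{S(v)}$. (3) Return the resulting tree $D$. *)

From HB Require Import structures.
From mathcomp Require Import all_boot all_order all_algebra.
Set Implicit Arguments. Unset Strict Implicit. Unset Printing Implicit Defensive.
Import Order.TTheory GRing.Theory Num.Theory.
Local Open Scope ring_scope.

(* A decision tree: a leaf labelled by a class, or an internal node labelled
   by a test, with one child per test outcome (children for outcomes that no
   object of the current set takes are irrelevant). *)
Inductive dtree (Tst V K : Type) : Type :=
| Leaf of K
| Node of Tst & (V -> dtree Tst V K).
Arguments Leaf {Tst V K} _.
Arguments Node {Tst V K} _ _.

Section DFEP.
Variables (R : realFieldType) (S : finType) (K : eqType) (Tst : finType)
  (l : nat) (test : Tst -> S -> 'I_l) (cls : S -> K) (p : S -> R)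
  (c : Tst -> rat).

Local Notation tree := (dtree Tst 'I_l K).

Definition branch (X : {set S}) (t : Tst) (i : 'I_l) : {set S} :=
  X :&: [set s | test t s == i].

Fixpoint is_dtree (X : {set S}) (D : tree) : Prop :=
  match D with
  | Leaf k => forall s, s \in X -> cls s = k
  | Node t ch =>
      ~ (exists k, forall s, s \in X -> cls s = k) /\
      forall i, (exists s, s \in branch X t i) -> is_dtree (branch X t i) (ch i)
  end.

Fixpoint cost (D : tree) (s : S) : R :=
  match D with
  | Leaf _ => 0
  | Node t ch => ratr (c t) + cost (ch (test t s)) s
  end.

Definition costW (D : tree) : R := \big[Num.max/0]_(s : S) cost D s.
Definition costE (D : tree) : R := \sum_(s : S) p s * cost D s.

(* D^X: the decision tree for X obtained from D by disassociating the objects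
   outside X; nodes whose remaining (nonempty) object set is single-class
   become leaves of that class. *)
Fixpoint restrict (X : {set S}) (D : tree) : tree :=
  match D with
  | Leaf k => Leaf k
  | Node t ch =>
      match [pick s in X] with
      | Some s0 =>
          if [forall s in X, cls s == cls s0] then Leaf (cls s0)
          else Node t (fun i => restrict (branch X t i) (ch i))
      | None => D
      end
  end.

(* Traverse D_E; acc = cost of the path from the root to the parent of the
   current node, X = objects reaching the current node (= S(v)).  A node v is
   replaceable iff acc < thr <= acc + c(test at v); it is then replaced by
   D_W^{S(v)}. *)
Fixpoint combine_aux (DW : tree) (thr acc : R) (X : {set S}) (D : tree) : tree :=
  match D with
  | Leaf k => Leaf k
  | Node t ch =>
      if (acc < thr) && (thr <= acc + ratr (c t)) then restrict X DW
      else Node t (fun i => combine_aux DW thr (acc + ratr (c t)) (branch X t i) (ch i))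
  end.

Definition combine_trees (DE DW : tree) (rho : R) : tree :=
  combine_aux DW (rho * costW DW) 0 [set: S] DE.

End DFEP.

From HB Require Import structures.
From mathcomp Require Import all_boot all_order all_algebra.
From mathcomp Require Import lra.
Import Order.TTheory GRing.Theory Num.Theory.
Set Implicit Arguments.
Unset Strict Implicit.
Unset Printing Implicit Defensive.
Local Open Scope ring_scope.

(* Follow one object s down the combined tree, with acc the cost paid so far.
   If s never meets a replaceable node, it pays exactly its cost in D_E, and
   that cost stays below rho W.  Otherwise it pays less than rho W before the
   replaceable node and at most W inside the restricted copy of D_W; since
   reaching that node already costs rho W in D_E, the extra W is at most
   cost(D_E, s) / rho.  Summing over s (resp. maximising) gives both bounds.
   The threshold rho W is positive unless D_E is a leaf: a node of D_E means
   the objects are not all of one class, so D_W is not a leaf either. *)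

Section CombineTrees.
Variables (R : realFieldType) (S : finType) (K : eqType) (Tst : finType)
  (l : nat) (test : Tst -> S -> 'I_l) (cls : S -> K) (c : Tst -> rat).
Hypothesis c_pos : forall t, 0 < c t.

Local Notation tree := (dtree Tst 'I_l K).
Local Notation cost := (cost R test c).
Local Notation costW := (costW R test c).

Lemma ratr_cost_gt0 t : 0 < (ratr (c t) : R).
Proof. by rewrite ltr0q. Qed.

Lemma cost_ge0 (D : tree) s : 0 <= cost D s.
Proof. by elim: D => //= t ch IH; rewrite addr_ge0 // ltW ?ratr_cost_gt0. Qed.

Lemma cost_Node_gt0 t (ch : 'I_l -> tree) s : 0 < cost (Node t ch) s.
Proof. by rewrite /= ltr_pwDl ?ratr_cost_gt0 ?cost_ge0. Qed.

Lemma cost_restrict_le (X : {set S}) (D : tree) s :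
  cost (restrict test cls X D) s <= cost D s.
Proof.
elim: D X => //= t ch IH X; case: pickP => // s0 _.
by case: ifP => _ /=; rewrite ?lerD2l ?addr_ge0 ?cost_ge0 // ltW ?ratr_cost_gt0.
Qed.

Lemma cost_le_costW (D : tree) s : cost D s <= costW D.
Proof. by rewrite /costW (bigD1 s) //= le_max lexx. Qed.

Lemma costW_le (D : tree) (b : R) :
  0 <= b -> (forall s, cost D s <= b) -> costW D <= b.
Proof.
move=> b0 Db; apply: (big_ind (fun x => x <= b)) => // x y xb yb.
by rewrite ge_max xb.
Qed.

Lemma costW_ge0 (D : tree) : 0 <= costW D.
Proof.
apply: (big_ind (fun x => 0 <= x)) => // [x y x0 _ | s _]; last exact: cost_ge0.
by rewrite le_max x0.
Qed.

Lemma costE_le (p : S -> R) (D D' : tree) (a : R) :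
  (forall s, 0 <= p s) -> (forall s, cost D s <= a * cost D' s) ->
  costE test p c D <= a * costE test p c D'.
Proof.
move=> p_ge0 DD'; rewrite /costE mulr_sumr; apply: ler_sum => s _.
by rewrite mulrCA ler_wpM2l.
Qed.

Section CombineAux.
Variables (DW : tree) (rho thr : R).
Hypothesis rho_pos : 0 < rho.

Lemma combine_aux_cost_le_expected (D : tree) (X : {set S}) (acc : R) s :
  0 <= acc -> rho * cost DW s <= thr ->
  acc + cost (combine_aux test cls c DW thr acc X D) s
    <= (1 + 1 / rho) * (acc + cost D s).
Proof.
move=> acc0 hW; elim: D X acc acc0 => [k|t ch IH] X acc acc0 /=.
  by rewrite !addr0 mulrDl mul1r lerDl mulr_ge0 // ltW // divr_gt0.
have ct0 := ratr_cost_gt0 t; have chs0 := cost_ge0 (ch (test t s)) s.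
case: ifP => [/andP[_ thr_le] | _].
  set A := acc + (_ + cost (ch _) s).
  have restr_le : rho * cost (restrict test cls X DW) s <= A.
    apply: le_trans (ler_wpM2l (ltW rho_pos) (cost_restrict_le X DW s)) _.
    by apply: le_trans hW _; apply: le_trans thr_le _; rewrite /A; lra.
  have acc_le : acc <= A by rewrite /A; lra.
  by rewrite mulrDl mul1r lerD // mul1r mulrC ler_pdivlMr // mulrC.
rewrite /= addrA; apply: le_trans (IH _ _ _ _) _; first lra.
by rewrite !addrA.
Qed.

Lemma combine_aux_cost_le_worst (D : tree) (X : {set S}) (acc : R) s :
  acc < thr ->
  acc + cost (combine_aux test cls c DW thr acc X D) s <= thr + cost DW s.
Proof.
elim: D X acc => [k|t ch IH] X acc /= acc_lt.
  by rewrite addr0 ler_wpDr ?cost_ge0 // ltW.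
case: ifP => [_ | /negbT]; first by rewrite lerD ?cost_restrict_le // ltW.
rewrite acc_lt /= -ltNge => thr_lt.
by rewrite /= addrA; apply: IH.
Qed.

End CombineAux.

Lemma is_dtree_setT_Node_mixed t (ch : 'I_l -> tree) :
  is_dtree test cls [set: S] (Node t ch) -> ~ exists k, forall s, cls s = k.
Proof. by case=> mixed _ [k hk]; apply: mixed; exists k. Qed.

Lemma costW_gt0_of_mixed (DW : tree) (s0 : S) :
  is_dtree test cls [set: S] DW -> ~ (exists k, forall s, cls s = k) ->
  0 < costW DW.
Proof.
case: DW => [k /= hk | t ch _] mixed; last first.
  exact: lt_le_trans (cost_Node_gt0 t ch s0) (cost_le_costW _ s0).
by exfalso; apply: mixed; exists k => s; apply: hk; rewrite inE.
Qed.

Lemma combine_trees_cost_le (DE DW : tree) (rho : R) s :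
  0 < rho -> is_dtree test cls [set: S] DE -> is_dtree test cls [set: S] DW ->
  let D := combine_trees test cls c DE DW rho in
  cost D s <= (1 + 1 / rho) * cost DE s /\ cost D s <= (1 + rho) * costW DW.
Proof.
move=> rho_pos hDE hDW D; have W0 := costW_ge0 DW.
case: DE hDE @D => [k _ | t ch hDE] /=.
  by rewrite mulr0 mulr_ge0 ?addr_ge0 // ltW.
have W_pos := costW_gt0_of_mixed s hDW (is_dtree_setT_Node_mixed hDE).
have rW_pos : 0 < rho * costW DW by rewrite mulr_gt0.
have hW : rho * cost DW s <= rho * costW DW.
  by rewrite ler_pM2l ?cost_le_costW.
have [expected worst] :=
  (combine_aux_cost_le_expected rho_pos (Node t ch) [set: S] (lexx 0) hW,
   combine_aux_cost_le_worst DW (Node t ch) [set: S] s rW_pos).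
rewrite !add0r in expected worst; split=> //.
by apply: le_trans worst _; rewrite mulrDl mul1r addrC lerD2r cost_le_costW.
Qed.

End CombineTrees.

Theorem theorem2 (R : realFieldType) (S : finType) (K : eqType) (Tst : finType)
  (l : nat) (test : Tst -> S -> 'I_l) (cls : S -> K) (p : S -> R)
  (c : Tst -> rat)
  (complete : forall s1 s2 : S, s1 != s2 -> exists t, test t s1 != test t s2)
  (p_ge0 : forall s, 0 <= p s) (p_sum1 : \sum_(s : S) p s = 1)
  (c_pos : forall t, 0 < c t)
  (rho : R) (rho_pos : 0 < rho)
  (DE DW : dtree Tst 'I_l K)
  (hDE : is_dtree test cls [set: S] DE) (hDW : is_dtree test cls [set: S] DW) :
  let E := costE test p c DE in
  let W : R := costW R test c DW in
  let D := combine_trees test cls c DE DW rho in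
  costE test p c D <= (1 + 1 / rho) * E /\ costW R test c D <= (1 + rho) * W.
Proof.
move=> E W D.
have pointwise s := combine_trees_cost_le c_pos s rho_pos hDE hDW.
split; first by apply: costE_le => // s; case: (pointwise s).
apply: costW_le => [|s]; last by case: (pointwise s).
by rewrite mulr_ge0 ?addr_ge0 ?costW_ge0 // ltW.
Qed.
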